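(* For any integers $1\le n<m$, there exists a (connected) graph $G$ with $D(G)=n$ and $\dim(G)=m$.
   Context: All graphs are finite and simple. For a connected graph $G$ with shortest-path distance $d_G$, a set $S\subseteq V(G)$ is resolving if for any two distinct vertices $x,y$ there is $s\in S$ with $d_G(x,s)\neq d_G(y,s)$; the metric dimension $\dim(G)$ is the minimum size of a resolving set. A distinguishing coloring of a graph $G$ is a (not necessarily proper) vertex coloring such that the only automorphism of $G$ mapping every vertex to a vertex of the same color is the identity; the distinguishing number $D(G)$ is the minimum number of colors in a distinguishing coloring of $G$. *)

From mathcomp Require Import all_boot all_fingroup.
Set Implicit Arguments. Unset Strict Implicit. Unset Printing Implicit Defensive.

Definition simple_graph (T : finType) (e : rel T) : Prop :=
  symmetric e /\ irreflexive e.

Definition connected_graph (T : finType) (e : rel T) : Prop :=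
  forall x y : T, connect e x y.

Definition walk_len (T : finType) (e : rel T) (x y : T) (k : nat) : bool :=
  [exists p : k.-tuple T, path e x p && (last x p == y)].

(* shortest-path distance: the least k such that a walk of length k from
   x to y exists (searching k < #|T|; in a connected graph it exists). *)
Definition gdist (T : finType) (e : rel T) (x y : T) : nat :=
  find (walk_len e x y) (iota 0 #|T|).

Definition resolving (T : finType) (e : rel T) (S : {set T}) : Prop :=
  forall x y : T, x != y -> exists2 s, s \in S & gdist e x s != gdist e y s.

Definition metric_dim_is (T : finType) (e : rel T) (m : nat) : Prop :=
  (exists S : {set T}, resolving e S /\ #|S| = m) /\
  (forall S : {set T}, resolving e S -> m <= #|S|).

Definition automorphism (T : finType) (e : rel T) (f : {perm T}) : Prop :=
  forall x y : T, e (f x) (f y) = e x y.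

Definition distinguishing (T : finType) (e : rel T) (k : nat) (c : T -> 'I_k) : Prop :=
  forall f : {perm T}, automorphism e f -> (forall x, c (f x) = c x) -> f = 1%g.

Definition dist_number_is (T : finType) (e : rel T) (n : nat) : Prop :=
  (exists c : T -> 'I_n, distinguishing e c) /\
  (forall k (c : T -> 'I_k), distinguishing e c -> n <= k).

From mathcomp Require Import all_boot all_fingroup zify.
Set Implicit Arguments. Unset Strict Implicit. Unset Printing Implicit Defensive.

(* The witness is a spider: a centre with m + 1 legs, n of length one and the
   others of the distinct lengths 2, ..., m - n + 2.  Distances are explicit
   (|d - d'| along a common leg, d + d' otherwise).  The centre is the only
   vertex of degree at least 3, so automorphisms preserve depth and map leg
   ends to leg ends of the same length; hence colouring the n pendant legs
   apart makes the spider rigid, while those n pendant vertices are pairwise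
   twins and need n colours.  A resolving set must meet every leg but one, and
   the ends of all legs but one resolve the spider. *)

Section Walks.
Variables (T : finType) (e : rel T).

Lemma walk_lenP x y k :
  reflect (exists2 p : seq T, size p = k & path e x p /\ last x p = y)
          (walk_len e x y k).
Proof.
apply: (iffP existsP) => [[p /andP [pp /eqP lp]]|[p sp [pp lp]]].
  by exists p; rewrite ?size_tuple.
by exists (tcast sp (in_tuple p)); rewrite val_tcast /= pp lp eqxx.
Qed.

Lemma walk_len_short x y k :
  walk_len e x y k -> exists2 j, j < #|T| & walk_len e x y j.
Proof.
case/walk_lenP => p _ [pp <-]; case: (shortenP pp) => p' pp' up' _.
exists (size p'); last by apply/walk_lenP; exists p'.
by move/card_uniqP: up' => /= <-; apply: max_card.
Qed.

Lemma gdist_least_walk x y k :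
  walk_len e x y k -> (forall j, walk_len e x y j -> k <= j) -> gdist e x y = k.
Proof.
move=> wk kmin; have [j jT wj] := walk_len_short wk.
have kT : k < #|T| by apply: leq_ltn_trans (kmin j wj) jT.
rewrite /gdist -(subnKC (ltnW kT)) iotaD find_cat size_iota add0n.
have -> : has (walk_len e x y) (iota 0 k) = false.
  by apply/hasPn => i; rewrite mem_iota add0n => /andP [_ ik]; apply/negP => /kmin; lia.
by case E: (#|T| - k) => [|r]; [lia | rewrite /= wk addn0].
Qed.

Section Potential.
(* [D] is a candidate for the distance from [x]. *)
Variables (D : T -> nat) (x : T).
Hypotheses (D_x : D x = 0) (D_eq0 : forall y, D y = 0 -> y = x)
           (D_lipschitz : forall y z, e y z -> D z <= (D y).+1)
           (D_descent : forall y, 0 < D y -> exists2 z, e z y & D z = (D y).-1).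

Lemma walk_len_potential y : walk_len e x y (D y).
Proof.
move Dy: (D y) => k; elim: k y Dy => [|k IHk] y Dy.
  by apply/walk_lenP; exists [::]; rewrite ?(D_eq0 Dy).
have [z ezy Dz] : exists2 z, e z y & D z = (D y).-1 by apply: D_descent; rewrite Dy.
have /walk_lenP [p sp [pp lp]] := IHk z (ltac:(by rewrite Dz Dy)).
apply/walk_lenP; exists (rcons p y); first by rewrite size_rcons sp.
by rewrite rcons_path pp lp ezy last_rcons.
Qed.

Lemma potential_le_walk y k : walk_len e x y k -> D y <= k.
Proof.
case/walk_lenP => p <- [+ <-]; rewrite -[size p]add0n -D_x.
elim: p x => [|z p IHp] a /=; first by rewrite addn0.
by case/andP=> /D_lipschitz Dz /IHp; lia.
Qed.

Lemma gdist_potential y : gdist e x y = D y.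
Proof. exact: gdist_least_walk (walk_len_potential y) (@potential_le_walk y). Qed.

Lemma connect_potential y : connect e x y.
Proof. by case/walk_lenP: (walk_len_potential y) => p _ [pp <-]; apply/connectP; exists p. Qed.
End Potential.

Definition deg_le1 z := forall a b, e z a -> e z b -> a = b.

Section Automorphisms.
Local Open Scope group_scope.
Variable f : {perm T}.
Hypothesis f_aut : automorphism e f.

Lemma path_map_aut a p : path e (f a) (map f p) = path e a p.
Proof. by elim: p a => [|b p IHp] a //=; rewrite f_aut IHp. Qed.

Lemma walk_len_aut x y k : walk_len e (f x) (f y) k = walk_len e x y k.
Proof.
apply/walk_lenP/walk_lenP => [[p sp [pp lp]]|[p sp [pp lp]]].
  exists (map f^-1 p); rewrite ?size_map //.
  rewrite -(path_map_aut x) -map_comp (eq_map (permKV f)) map_id pp.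
  by rewrite -{1}(permK f x) last_map lp permK.
by exists (map f p); rewrite ?size_map // path_map_aut last_map lp.
Qed.

Lemma gdist_aut x y : gdist e (f x) (f y) = gdist e x y.
Proof. by apply: eq_find => k; apply: walk_len_aut. Qed.

Lemma deg_le1_aut z : deg_le1 z -> deg_le1 (f z).
Proof.
move=> z_le1 a b ea eb; apply: (can_inj (permKV f)); apply: z_le1.
  by rewrite -f_aut permKV.
by rewrite -f_aut permKV.
Qed.

End Automorphisms.

Section Twins.
Hypotheses (e_sym : symmetric e) (e_irr : irreflexive e).
Variables a b : T.
Hypothesis ab_twins : forall z, z != a -> z != b -> e a z = e b z.

Lemma twins_tperm_aut : automorphism e (tperm a b).
Proof.
move=> x y; case: tpermP => [->|->|/eqP xa /eqP xb];
  case: tpermP => [->|->|/eqP ya /eqP yb];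
  rewrite ?e_irr ?[e _ a]e_sym ?[e _ b]e_sym ?(ab_twins xa xb) ?(ab_twins ya yb) //.
Qed.

Lemma distinguishing_twins k (c : T -> 'I_k) :
  a != b -> distinguishing e c -> c a != c b.
Proof.
move=> /eqP neq_ab c_dist; apply/eqP => c_ab; apply: neq_ab.
have c_tperm x : c (tperm a b x) = c x by case: tpermP => [->|->|].
by rewrite -[b](tpermL a b) (c_dist _ twins_tperm_aut c_tperm) perm1.
Qed.

End Twins.
End Walks.

Section Spider.
Variables n m : nat.
Hypothesis n_gt0 : 0 < n.
Hypothesis lt_nm : n < m.

Definition leg_len i := if i < n then 1 else i - n + 2.

(* Legs are indexed by [i <= m]; [Some (i, d)] is the vertex of leg [i] at
   depth [d + 1] and [None] is the centre, which has depth 0 and leg 0. *)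
Definition spider_vertex := option {p : 'I_m.+1 * 'I_m.+1 | p.2 < leg_len p.1}.
Definition spider_order := #|{: spider_vertex}|.
Local Notation V := 'I_spider_order.

Definition depth (x : V) : nat := if enum_val x is Some p then (val p).2.+1 else 0.
Definition leg (x : V) : nat := if enum_val x is Some p then val (val p).1 else 0.
Definition center : V := enum_rank (None : spider_vertex).

Definition aligned (x y : V) := [|| depth x == 0, depth y == 0 | leg x == leg y].

Definition spider : rel V := fun x y =>
  aligned x y && ((depth x == depth y + 1) || (depth y == depth x + 1)).

Definition spider_dist (x y : V) : nat :=
  if aligned x y then (depth x - depth y) + (depth y - depth x) else depth x + depth y.

Lemma leg_len_gt0 i : 0 < leg_len i.
Proof. rewrite /leg_len; case: ifP; lia. Qed.

Lemma depth_center : depth center = 0.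
Proof. by rewrite /depth enum_rankK. Qed.

Lemma depth_eq0 x : depth x = 0 -> x = center.
Proof.
rewrite /depth; case Ex: (enum_val x) => [//|] _.
by apply: enum_val_inj; rewrite Ex enum_rankK.
Qed.

Lemma leg_depth_inj x y : 0 < depth x -> leg x = leg y -> depth x = depth y -> x = y.
Proof.
rewrite /depth /leg; case Ex: (enum_val x) => [[[a b] ?]|] //.
case Ey: (enum_val y) => [[[c d] ?]|] //= _ eq_ac [eq_bd].
apply: enum_val_inj; rewrite Ex Ey; congr Some; apply: val_inj => /=.
by congr pair; apply: val_inj.
Qed.

Lemma leg_ltn x : leg x < m.+1.
Proof. by rewrite /leg; case: (enum_val x) => [[[a b] ?]|] /=. Qed.

Lemma depth_le_leg_len x : depth x <= leg_len (leg x).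
Proof. by rewrite /depth /leg; case: (enum_val x) => [[[a b] /= ?]|]. Qed.

Definition vertex i d : V := odflt center [pick x | (leg x == i) && (depth x == d)].

Lemma vertexP i d : i < m.+1 -> 0 < d <= leg_len i ->
  leg (vertex i d) = i /\ depth (vertex i d) = d.
Proof.
move=> lt_im /andP [d_gt0 le_d_len].
rewrite /vertex; case: pickP => [x /andP [/eqP -> /eqP ->] //|no_vertex].
have lt_dm : d.-1 < m.+1 by move: le_d_len; rewrite /leg_len; case: ifP; lia.
have lt_d_len : val (Ordinal lt_dm) < leg_len (Ordinal lt_im) by rewrite /=; lia.
have := no_vertex (enum_rank (Some (exist _ (_, _) lt_d_len) : spider_vertex)).
by rewrite /leg /depth enum_rankK /= eqxx prednK ?eqxx.
Qed.

Definition leg_end i := vertex i (leg_len i).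

Lemma leg_endP i : i < m.+1 -> leg (leg_end i) = i /\ depth (leg_end i) = leg_len i.
Proof. by move=> lt_im; apply: vertexP; rewrite ?leg_len_gt0 ?leqnn. Qed.

Lemma spider_sym : symmetric spider.
Proof. by move=> x y; rewrite /spider /aligned; apply/idP/idP; lia. Qed.

Lemma spider_irr : irreflexive spider.
Proof. by move=> x; rewrite /spider; apply/negP; lia. Qed.

Lemma spider_dist_lipschitz x y z : spider y z -> spider_dist x z <= (spider_dist x y).+1.
Proof. by rewrite /spider /spider_dist /aligned; do ?case: ifP; lia. Qed.

Lemma spider_dist_eq0 x y : spider_dist x y = 0 -> y = x.
Proof.
rewrite /spider_dist /aligned; case: ifP => aligned_xy dist0.
  have [x0|x_gt0] := posnP (depth x).
    have y0 : depth y = 0 by lia.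
    by rewrite (depth_eq0 x0) (depth_eq0 y0).
  have eq_leg : leg x = leg y by lia.
  by apply: esym; apply: leg_depth_inj => //; lia.
have x0 : depth x = 0 by lia.
have y0 : depth y = 0 by lia.
by rewrite (depth_eq0 x0) (depth_eq0 y0).
Qed.

(* Step from [y] up [x]'s leg if [y] lies below [x] on it, and towards the
   centre otherwise. *)
Lemma spider_dist_descent x y : 0 < spider_dist x y ->
  exists2 z, spider z y & spider_dist x z = (spider_dist x y).-1.
Proof.
move=> dist_gt0; have lt_ym := leg_ltn y; have le_y_len := depth_le_leg_len y.
have [y0|y_gt0] := posnP (depth y).
  have [lz dz] := @vertexP (leg x) 1 (leg_ltn x) (leg_len_gt0 (leg x)).
  exists (vertex (leg x) 1); move: dist_gt0;
    by rewrite /spider /spider_dist /aligned lz dz y0; do ?case: ifP; lia.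
have [/andP [/eqP eq_leg lt_yx]|away] := boolP ((leg x == leg y) && (depth y < depth x)).
  have := depth_le_leg_len x; rewrite eq_leg => le_x_len.
  have [lz dz] := @vertexP (leg y) (depth y).+1 lt_ym (ltac:(lia)).
  exists (vertex (leg y) (depth y).+1); move: dist_gt0;
    by rewrite /spider /spider_dist /aligned lz dz; do ?case: ifP; lia.
have [y1|y_ne1] := eqVneq (depth y) 1.
  exists center; move: away dist_gt0;
    by rewrite /spider /spider_dist /aligned depth_center y1; do ?case: ifP; lia.
have [lz dz] := @vertexP (leg y) (depth y).-1 lt_ym (ltac:(lia)).
exists (vertex (leg y) (depth y).-1); move: away dist_gt0;
  by rewrite /spider /spider_dist /aligned lz dz; do ?case: ifP; lia.
Qed.

Lemma spider_dist_refl x : spider_dist x x = 0.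
Proof. by rewrite /spider_dist /aligned eqxx !orbT subnn. Qed.

Lemma gdist_spider x y : gdist spider x y = spider_dist x y.
Proof.
exact: gdist_potential (spider_dist_refl x) (@spider_dist_eq0 x)
  (@spider_dist_lipschitz x) (@spider_dist_descent x) y.
Qed.

Lemma spider_connected : connected_graph spider.
Proof.
move=> x; exact: connect_potential (@spider_dist_eq0 x) (@spider_dist_descent x).
Qed.

Lemma spider_nbr_leg z a : 0 < depth z -> 0 < depth a -> spider z a -> leg a = leg z.
Proof. by rewrite /spider /aligned; lia. Qed.

Lemma spider_nbr_inj z a b : 0 < depth z -> spider z a -> spider z b ->
  depth a = depth b -> a = b.
Proof.
move=> z_gt0 za zb eq_ab; have [a0|a_gt0] := posnP (depth a).
  by rewrite (depth_eq0 a0) (@depth_eq0 b) // -eq_ab.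
apply: leg_depth_inj => //; rewrite (spider_nbr_leg z_gt0 a_gt0 za).
by rewrite (spider_nbr_leg z_gt0 _ zb) // -eq_ab.
Qed.

Lemma spider_three_nbrs z a b c : a != b -> b != c -> a != c ->
  spider z a -> spider z b -> spider z c -> z = center.
Proof.
move=> /eqP ab /eqP bc /eqP ac za zb zc.
have [z0|z_gt0] := posnP (depth z); first exact: depth_eq0.
have nbr_depth y : spider z y -> depth y = (depth z).-1 \/ depth y = (depth z).+1.
  by rewrite /spider; lia.
have : depth a = depth b \/ depth b = depth c \/ depth a = depth c.
  by have := nbr_depth _ za; have := nbr_depth _ zb; have := nbr_depth _ zc; lia.
case=> [eq|[eq|eq]]; [case: ab | case: bc | case: ac]; exact: spider_nbr_inj z_gt0 _ _ eq.
Qed.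

Lemma deg_le1_spiderP z : 0 < depth z ->
  deg_le1 spider z <-> depth z = leg_len (leg z).
Proof.
move=> z_gt0; have le_z_len := depth_le_leg_len z; have lt_zm := leg_ltn z.
split=> [z_le1|z_end].
  have [lt_z_len|] := ltnP (depth z) (leg_len (leg z)); last lia.
  have [la da] := @vertexP (leg z) (depth z).+1 lt_zm (ltac:(lia)).
  have z_up : spider z (vertex (leg z) (depth z).+1) by rewrite /spider /aligned la da; lia.
  have [z1|z_ne1] := eqVneq (depth z) 1.
    have z_center : spider z center by rewrite /spider /aligned depth_center z1.
    by move/(congr1 depth): (z_le1 _ _ z_up z_center); rewrite da depth_center.
  have [lb db] := @vertexP (leg z) (depth z).-1 lt_zm (ltac:(lia)).
  have z_down : spider z (vertex (leg z) (depth z).-1).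
    by rewrite /spider /aligned lb db; lia.
  by move/(congr1 depth): (z_le1 _ _ z_up z_down); rewrite da db; lia.
have nbr_below a : spider z a -> depth a = (depth z).-1.
  move=> za; have [a0|a_gt0] := posnP (depth a); first by move: za; rewrite /spider a0; lia.
  have := depth_le_leg_len a; rewrite (spider_nbr_leg z_gt0 a_gt0 za).
  by move: za; rewrite /spider; lia.
move=> a b za zb; apply: (spider_nbr_inj z_gt0 za zb).
by rewrite (nbr_below a za) (nbr_below b zb).
Qed.

Lemma leg_len_eq i j : leg_len i = leg_len j -> i = j \/ (i < n) && (j < n).
Proof. by rewrite /leg_len; do 2!case: ifP; lia. Qed.

(* Legs [i >= n] get the junk colour 0, which is harmless: they are told
   apart by their lengths. *)
Definition leg_color (x : V) : 'I_n := insubd (Ordinal n_gt0) (leg x).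

Section SpiderAutomorphism.
Variable f : {perm V}.
Hypothesis f_aut : automorphism spider f.

Lemma spider_aut_center : f center = center.
Proof.
have vertexP1 i : i < 3 -> leg (vertex i 1) = i /\ depth (vertex i 1) = 1.
  by move=> lt_i3; apply: vertexP; rewrite ?leg_len_gt0 //; lia.
have [_ d0] := vertexP1 0 erefl; have [_ d1] := vertexP1 1 erefl.
have [_ d2] := vertexP1 2 erefl.
have ne_f i j : i < 3 -> j < 3 -> i != j -> f (vertex i 1) != f (vertex j 1).
  move=> lt_i3 lt_j3 ne_ij; rewrite (inj_eq perm_inj); apply: contra ne_ij => /eqP eq_ij.
  by have [li _] := vertexP1 i lt_i3; have [lj _] := vertexP1 j lt_j3; rewrite -li -lj eq_ij.
apply: (spider_three_nbrs (ne_f 0 1 _ _ _) (ne_f 1 2 _ _ _) (ne_f 0 2 _ _ _)) => //;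
  by rewrite f_aut /spider /aligned depth_center ?d0 ?d1 ?d2.
Qed.

Lemma spider_aut_depth x : depth (f x) = depth x.
Proof.
have := gdist_aut f_aut center x; rewrite spider_aut_center !gdist_spider.
by rewrite /spider_dist /aligned depth_center eqxx /= !subn0.
Qed.

Hypothesis f_color : forall x, leg_color (f x) = leg_color x.

Lemma spider_aut_leg_end i : i < m.+1 -> f (leg_end i) = leg_end i.
Proof.
move=> lt_im; have [li di] := leg_endP lt_im; set l := leg_end i in li di *.
have l_gt0 : 0 < depth l by rewrite di leg_len_gt0.
have fl_gt0 : 0 < depth (f l) by rewrite spider_aut_depth.
have l_le1 : deg_le1 spider l by apply/deg_le1_spiderP; rewrite // li.
have /(deg_le1_spiderP fl_gt0) := deg_le1_aut f_aut l_le1.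
rewrite spider_aut_depth di => /esym/leg_len_eq eq_leg.
apply: leg_depth_inj => //; last exact: spider_aut_depth.
rewrite li.
case: eq_leg => [//|/andP [short_fl short_l]].
by have := congr1 val (f_color l); rewrite !val_insubd short_fl li short_l.
Qed.

Lemma spider_aut_id : f = 1%g.
Proof.
apply/permP => x; rewrite perm1.
have [x0|x_gt0] := posnP (depth x).
  by rewrite (depth_eq0 x0) spider_aut_center.
have [li di] := leg_endP (leg_ltn x).
have := gdist_aut f_aut (leg_end (leg x)) x.
rewrite spider_aut_leg_end ?leg_ltn // !gdist_spider => eq_dist.
have fx_gt0 : 0 < depth (f x) by rewrite spider_aut_depth.
apply: leg_depth_inj; rewrite ?spider_aut_depth //.
have := depth_le_leg_len x.
move: eq_dist; rewrite /spider_dist /aligned spider_aut_depth li di eqxx !orbT.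
case: ifP => [|_]; first by move=> /orP [|/orP [|/eqP //]]; lia.
lia.
Qed.

End SpiderAutomorphism.

Lemma spider_short_leaf i z : i < n -> spider (vertex i 1) z = (z == center).
Proof.
move=> lt_in; have [li di] := @vertexP i 1 (ltac:(lia)) (ltac:(by rewrite /leg_len lt_in)).
have [z0|z_gt0] := posnP (depth z).
  by rewrite (depth_eq0 z0) eqxx /spider /aligned depth_center di.
have -> : (z == center) = false by apply/eqP => zc; move: z_gt0; rewrite zc depth_center.
have short_z : leg z = i -> leg_len (leg z) = 1 by move->; rewrite /leg_len lt_in.
apply: negbTE; have := depth_le_leg_len z.
by rewrite /spider /aligned li di; lia.
Qed.

Lemma spider_dist_number_ge k (c : V -> 'I_k) : distinguishing spider c -> n <= k.
Proof.
move=> c_dist.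
have leg_leaf (i : 'I_n) : leg (vertex i 1) = i.
  have lt_im : i < m.+1 by have := ltn_ord i; lia.
  by have [] := @vertexP i 1 lt_im (ltac:(by rewrite /leg_len ltn_ord)).
have c_inj : injective (fun i : 'I_n => c (vertex i 1)).
  move=> i j /eqP; apply: contraTeq => ne_ij.
  apply: (distinguishing_twins spider_sym spider_irr) c_dist.
    by move=> z ? ?; rewrite !spider_short_leaf.
  by apply: contra ne_ij => /eqP eq_ij; rewrite -val_eqE /= -leg_leaf eq_ij leg_leaf.
by have := leq_card _ c_inj; rewrite !card_ord.
Qed.

Definition on_leg i x := (0 < depth x) && (leg x == i).

Lemma spider_dist_leg_starts i j s : i < m.+1 -> j < m.+1 ->
  ~~ on_leg i s -> ~~ on_leg j s -> spider_dist (vertex i 1) s = spider_dist (vertex j 1) s.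
Proof.
move=> lt_im lt_jm; have [li di] := @vertexP i 1 lt_im (leg_len_gt0 i).
have [lj dj] := @vertexP j 1 lt_jm (leg_len_gt0 j).
by rewrite /on_leg /spider_dist /aligned li di lj dj; do ?case: ifP; lia.
Qed.

Lemma spider_resolving_card S : resolving spider S -> m <= #|S|.
Proof.
move=> S_res; pose H := [set i : 'I_m.+1 | [exists s in S, on_leg i s]].
have H_le_S : #|H| <= #|S|.
  apply: leq_trans (leq_imset_card (fun s => inord (leg s) : 'I_m.+1) S).
  apply/subset_leq_card/subsetP => i; rewrite inE => /existsP [s /andP [sS /andP [_ /eqP si]]].
  by apply/imsetP; exists s => //; apply: val_inj; rewrite /= inordK si.
have H_compl : #|~: H| <= 1.
  apply/card_le1_eqP => i j; rewrite !inE => iH jH; apply/eqP/negPn/negP => ne_ij.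
  have [li _] := @vertexP i 1 (ltn_ord i) (leg_len_gt0 i).
  have [lj _] := @vertexP j 1 (ltn_ord j) (leg_len_gt0 j).
  have [|s sS] := S_res (vertex i 1) (vertex j 1).
    by apply: contra ne_ij => /eqP eq_ij; rewrite -val_eqE /= -li -lj eq_ij.
  rewrite !gdist_spider (@spider_dist_leg_starts i j s) ?eqxx //.
    by apply: contra iH => si; apply/existsP; exists s; rewrite sS.
  by apply: contra jH => sj; apply/existsP; exists s; rewrite sS.
by have := cardsC H; rewrite card_ord; lia.
Qed.

Lemma gdist_leg_end_neq (i : 'I_m.+1) x y :
  (depth x != depth y) || [&& 0 < depth x, depth x == depth y, leg x == i & leg y != i] ->
  gdist spider x (leg_end i) != gdist spider y (leg_end i).
Proof.
have [li di] := leg_endP (ltn_ord i); rewrite !gdist_spider.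
have := depth_le_leg_len x; have := depth_le_leg_len y; have := leg_len_gt0 i.
rewrite /spider_dist /aligned li di; set L := leg_len i.
have : leg y = i -> leg_len (leg y) = L by move->.
have : leg x = i -> leg_len (leg x) = L by move->.
by do ?case: ifP; lia.
Qed.

Definition leg_ends : {set V} := [set leg_end i | i : 'I_m.+1 in [set~ ord0]].

Lemma card_leg_ends : #|leg_ends| = m.
Proof.
rewrite card_in_imset ?cardsC1 ?card_ord // => i j _ _ eq_ij.
have [li _] := leg_endP (ltn_ord i); have [lj _] := leg_endP (ltn_ord j).
by apply/val_inj; rewrite /= -li -lj eq_ij.
Qed.

Lemma leg_ends_resolving : resolving spider leg_ends.
Proof.
move=> x y ne_xy.
have leg_endS (i : 'I_m.+1) : i != ord0 -> leg_end i \in leg_ends.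
  by move=> i_ne0; apply/imsetP; exists i; rewrite ?inE.
have [eq_depth|ne_depth] := eqVneq (depth x) (depth y); last first.
  have lt_1m : 1 < m.+1 by lia.
  exists (leg_end (Ordinal lt_1m)); first exact: leg_endS.
  by apply: gdist_leg_end_neq; rewrite ne_depth.
have [x0|x_gt0] := posnP (depth x).
  by move: ne_xy; rewrite (depth_eq0 x0) (@depth_eq0 y) ?eqxx // -eq_depth.
have ne_leg : leg x != leg y.
  by apply: contra ne_xy => /eqP eq_leg; apply/eqP/leg_depth_inj.
have [x_leg0|x_leg_ne0] := eqVneq (leg x) 0.
  exists (leg_end (Ordinal (leg_ltn y))).
    by apply: leg_endS; rewrite -val_eqE /= -x_leg0 eq_sym.
  rewrite eq_sym; apply: gdist_leg_end_neq.
  by rewrite -eq_depth x_gt0 !eqxx.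
exists (leg_end (Ordinal (leg_ltn x))); first by apply: leg_endS; rewrite -val_eqE.
by apply: gdist_leg_end_neq; rewrite x_gt0 eq_depth !eqxx /= eq_sym.
Qed.

End Spider.

Theorem proposition3p4 (n m : nat) :
  1 <= n -> n < m ->
  exists (N : nat) (e : rel 'I_N),
    [/\ simple_graph e, connected_graph e,
        dist_number_is e n & metric_dim_is e m].
Proof.
move=> n_gt0 lt_nm; exists (spider_order n m), (@spider n m); split.
- by split; [exact: spider_sym | exact: spider_irr].
- exact: spider_connected.
- split; last exact: spider_dist_number_ge.
  by exists (leg_color n_gt0) => f f_aut; apply: spider_aut_id.
- split; last exact: spider_resolving_card.
  by exists (@leg_ends n m); split; [exact: leg_ends_resolving | exact: card_leg_ends].
Qed.
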